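(* Let $L$ be a finite label set and let $\varphi,\psi$ be positive existential HML formulas. For every pointed finite $L$-labeled transition system $(G,v)$, the following are equivalent: (i) for every finite $L$-labeled transition system $H$ and every homomorphism $h:G\to H$, if $\varphi$ holds at $h(v)$ in $H$ then $\psi$ holds at $h(v)$ in $H$ (i.e. $(S_\varphi\to_\Omega S_\psi)(G,v)$); (ii) $\psi$ holds at $\iota(v)$ in $\mathrm{Ext}(G,v,\varphi)$.
   Context: Positive existential HML ($\mathit{HML}^+$) is generated by $\top$, $\varphi_1\wedge\varphi_2$, and $\langle a\rangle\varphi$ ($a\in L$), with $\langle a\rangle\varphi$ true at $s$ iff some $a$-successor satisfies $\varphi$. Homomorphisms are maps on states preserving labeled edges. $S_\varphi$ is the subfunctor of the underlying-set presheaf with $S_\varphi(G,v)$ iff $\varphi$ holds at $v$ in $G$, and the presheaf Heyting implication is $(S_1\to_\Omega S_2)(G,v)$ iff for all $H$ and $h:G\to H$, $S_1(H,h(v))\Rightarrow S_2(H,h(v))$. The free extension $\mathrm{Ext}(G,v,\varphi)$ with inclusion $\iota:G\hookrightarrow\mathrm{Ext}(G,v,\varphi)$ is defined recursively: for $\top$, $G$ itself; for $\varphi_1\wedge\varphi_2$, adjoin (disjointly) the witness trees for $\varphi_1$ and for $\varphi_2$ at $v$; for $\langle a\rangle\varphi'$, adjoin a fresh vertex $w$ with an edge $v\xrightarrow{a}w$ and then the witness tree for $\varphi'$ at $w$; all original edges of $G$ are kept, and no other edges are added. *)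

From mathcomp Require Import all_boot.
Set Implicit Arguments. Unset Strict Implicit. Unset Printing Implicit Defensive.

Record LTS (L : finType) := MkLTS { state : finType; trans : L -> rel state }.
Arguments state {L} l.
Arguments trans {L} l _ _ _.

Inductive hmlp (L : Type) : Type :=
| HTop : hmlp L
| HAnd : hmlp L -> hmlp L -> hmlp L
| HDia : L -> hmlp L -> hmlp L.
Arguments HTop {L}.

Fixpoint sat (L : finType) (G : LTS L) (phi : hmlp L) (s : state G) : bool :=
  match phi with
  | HTop => true
  | HAnd p1 p2 => @sat L G p1 s && @sat L G p2 s
  | HDia a p => [exists t : state G, trans G a s t && @sat L G p t]
  end.
Arguments sat {L} G phi s.

Definition is_hom (L : finType) (G H : LTS L) (h : state G -> state H) : Prop :=
  forall (a : L) (x y : state G), trans G a x y -> trans H a (h x) (h y).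

(* Presheaf Heyting implication (S_phi ->_Omega S_psi)(G,v), unfolded:
   quantifies over all finite LTSs H and homomorphisms h : G -> H. *)
Definition heyting_imp (L : finType) (phi psi : hmlp L) (G : LTS L) (v : state G) : Prop :=
  forall (H : LTS L) (h : state G -> state H),
    is_hom h -> sat H phi (h v) -> sat H psi (h v).

(* number of fresh vertices (one per diamond) *)
Fixpoint ndia (L : Type) (phi : hmlp L) : nat :=
  match phi with
  | HTop => 0
  | HAnd p1 p2 => ndia p1 + ndia p2
  | HDia _ p => (ndia p).+1
  end.

(* Witness-tree edges for phi rooted at r; fresh vertices are inr k, inr k.+1, ...
   Returns the added edges and the next fresh index. *)
Fixpoint wtree (L : Type) (S : Type) (phi : hmlp L) (r : S + nat) (k : nat)
  : seq ((S + nat) * L * (S + nat)) * nat :=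
  match phi with
  | HTop => ([::], k)
  | HAnd p1 p2 =>
      let (e1, k1) := wtree p1 r k in
      let (e2, k2) := wtree p2 r k1 in (e1 ++ e2, k2)
  | HDia a p =>
      let w := inr k in
      let (e, k') := wtree p w k.+1 in ((r, a, w) :: e, k')
  end.

Definition ext_state (L : finType) (G : LTS L) (phi : hmlp L) : finType :=
  (state G + 'I_(ndia phi))%type.

Definition ext_node (L : finType) (G : LTS L) (phi : hmlp L)
  (x : ext_state G phi) : state G + nat :=
  match x with inl s => inl s | inr i => inr (nat_of_ord i) end.

Definition ext_trans (L : finType) (G : LTS L) (v : state G) (phi : hmlp L)
  (a : L) : rel (ext_state G phi) :=
  fun x y =>
    (match x, y with inl s, inl t => trans G a s t | _, _ => false end)
    || ((ext_node x, a, ext_node y) \in (wtree phi (inl v) 0).1).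

Arguments ext_trans {L G} v phi a _ _.

Definition Ext (L : finType) (G : LTS L) (v : state G) (phi : hmlp L) : LTS L :=
  @MkLTS L (ext_state G phi) (ext_trans v phi).

Definition ext_incl (L : finType) (G : LTS L) (v : state G) (phi : hmlp L)
  (s : state G) : state (Ext v phi) := @inl (state G) 'I_(ndia phi) s.
Arguments ext_incl {L G} v phi s.
Arguments Ext {L G} v phi.
Arguments heyting_imp {L} phi psi {G} v.

From mathcomp Require Import all_boot.
From mathcomp Require Import zify.
Set Implicit Arguments. Unset Strict Implicit. Unset Printing Implicit Defensive.

(* The inclusion iota is a homomorphism and phi holds at iota(v) along the
   adjoined witness tree, so (i) applied to iota gives (ii).  Conversely, if
   phi holds at h(v) for a homomorphism h : G -> H, choosing an H-witness for
   every diamond of phi maps the witness tree into H and extends h to a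
   homomorphism Ext(G, v, phi) -> H fixing v; positive formulas are preserved
   by homomorphisms, so psi transfers from iota(v) to h(v). *)

Section WitnessTree.
Variables (L S : Type).
Implicit Types (p : hmlp L) (r : S + nat).

Lemma wtree_next p r k : (wtree p r k).2 = k + ndia p.
Proof.
elim: p r k => [|p1 IH1 p2 IH2|a p IH] r k /=; first by rewrite addn0.
- have := IH1 r k; case: (wtree p1 r k) => e1 k1 /= ->.
  have := IH2 r (k + ndia p1); case: (wtree p2 r _) => e2 k2 /= ->.
  by rewrite addnA.
- have := IH (inr k) k.+1; case: (wtree p _ _) => e k' /= ->.
  by rewrite addnS.
Qed.

Lemma wtree_and p1 p2 r k :
  wtree (HAnd p1 p2) r k =
  ((wtree p1 r k).1 ++ (wtree p2 r (k + ndia p1)).1, k + ndia p1 + ndia p2).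
Proof.
rewrite /=; have := wtree_next p1 r k; case: (wtree p1 r k) => e1 k1 /= ->.
by have := wtree_next p2 r (k + ndia p1); case: (wtree p2 r _) => e2 k2 /= ->.
Qed.

Lemma wtree_dia a p r k :
  wtree (HDia a p) r k =
  ((r, a, inr k) :: (wtree p (inr k) k.+1).1, k.+1 + ndia p).
Proof.
by rewrite /=; have := wtree_next p (inr k) k.+1; case: (wtree p _ _) => e k' /= ->.
Qed.

End WitnessTree.

Arguments wtree : simpl never.

(* The nodes [inl s] and [inr j] with [j < k]: those already present when the
   witness tree of a subformula starts allocating fresh vertices at index [k]. *)
Definition allocated (S : Type) (k : nat) (z : S + nat) : bool :=
  if z is inr j then j < k else true.

Lemma allocated_le (S : Type) k k' (z : S + nat) :
  k <= k' -> allocated k z -> allocated k' z.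
Proof. by case: z => //= j le_kk' /leq_trans; apply. Qed.

Lemma wtree_allocated (L S : eqType) (p : hmlp L) (r : S + nat) k x a y :
  allocated k r -> (x, a, y) \in (wtree p r k).1 ->
  allocated (k + ndia p) x && allocated (k + ndia p) y.
Proof.
elim: p r k => [|p1 IH1 p2 IH2|b p IH] r k r_alloc //=.
- rewrite wtree_and mem_cat addnA => /orP [/(IH1 _ _ r_alloc) | ].
    case/andP => x_alloc y_alloc.
    by rewrite (allocated_le _ x_alloc) ?(allocated_le _ y_alloc) ?leq_addr.
  by apply: IH2; apply: allocated_le r_alloc; apply: leq_addr.
- rewrite wtree_dia in_cons addnS -addSn => /orP [/eqP [-> _ ->] | ].
    by rewrite /= (allocated_le _ r_alloc) //; lia.
  by apply: IH; rewrite /= ltnSn.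
Qed.

Lemma sat_hom (L : finType) (G H : LTS L) (g : state G -> state H) :
  is_hom g -> forall p s, sat G p s -> sat H p (g s).
Proof.
move=> hom_g; elim => [|p1 IH1 p2 IH2|a p IH] s //=.
- by case/andP => /IH1 -> /IH2 ->.
- case/existsP => t /andP [st sat_t]; apply/existsP; exists (g t).
  by rewrite hom_g // IH.
Qed.

Section FreeExtension.
Variables (L : finType) (G : LTS L) (v : state G) (phi : hmlp L).

Lemma ext_incl_hom : is_hom (ext_incl v phi).
Proof. by move=> a x y xy; rewrite /= /ext_trans /= xy. Qed.

Lemma wtree_sat_ext (p : hmlp L) (r : state G + nat) k (x : ext_state G phi) :
  {subset (wtree p r k).1 <= (wtree phi (inl v) 0).1} ->
  k + ndia p <= ndia phi -> ext_node x = r -> sat (Ext v phi) p x.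
Proof.
elim: p r k x => [|p1 IH1 p2 IH2|a p IH] r k x //= sub_tree k_bound x_r.
- apply/andP; split.
  + apply: (IH1 r k) => // [z z_tree|]; last by lia.
    by apply: sub_tree; rewrite wtree_and mem_cat z_tree.
  + apply: (IH2 r (k + ndia p1)) => // [z z_tree|]; last by lia.
    by apply: sub_tree; rewrite wtree_and mem_cat z_tree orbT.
- have k_lt : k < ndia phi by lia.
  apply/existsP; exists (inr (Ordinal k_lt)); apply/andP; split.
  + apply/orP; right; rewrite x_r.
    by apply: sub_tree; rewrite wtree_dia mem_head.
  + apply: (IH (inr k) k.+1) => // [z z_tree|]; last by lia.
    by apply: sub_tree; rewrite wtree_dia in_cons z_tree orbT.
Qed.

Lemma sat_ext_incl : sat (Ext v phi) phi (ext_incl v phi v).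
Proof. exact: (wtree_sat_ext (r := inl v) (k := 0)). Qed.

End FreeExtension.

Definition node_map (S T : Type) (hS : S -> T) (f : nat -> T) (z : S + nat) : T :=
  match z with inl s => hS s | inr j => f j end.

Lemma node_map_allocated (S T : Type) (hS : S -> T) f f' k (z : S + nat) :
  (forall j, j < k -> f' j = f j) -> allocated k z ->
  node_map hS f' z = node_map hS f z.
Proof. by case: z => //= j; apply. Qed.

(* Agreeing with [f] below [k] keeps the images of the allocated nodes, the root
   included, so the witnesses of two conjuncts can be chosen one after the other. *)
Lemma wtree_realize (L : finType) (H : LTS L) (S : eqType) (hS : S -> state H)
  (p : hmlp L) (r : S + nat) k (f : nat -> state H) :
  allocated k r -> sat H p (node_map hS f r) ->
  exists2 f', (forall j, j < k -> f' j = f j) &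
    forall x a y, (x, a, y) \in (wtree p r k).1 ->
      trans H a (node_map hS f' x) (node_map hS f' y).
Proof.
elim: p r k f => [|p1 IH1 p2 IH2|a p IH] r k f r_alloc /=.
- by exists f.
- case/andP => sat1 sat2.
  have r_alloc' : allocated (k + ndia p1) r by apply: allocated_le r_alloc; lia.
  have [f1 f1_f tree1] := IH1 r k f r_alloc sat1.
  rewrite -(node_map_allocated _ f1_f r_alloc) in sat2.
  have [f2 f2_f1 tree2] := IH2 r (k + ndia p1) f1 r_alloc' sat2.
  exists f2 => [j j_lt|x b y]; first by rewrite f2_f1 ?f1_f //; lia.
  rewrite wtree_and mem_cat => /orP [xy|]; last exact: tree2.
  case/andP: (wtree_allocated r_alloc xy) => x_alloc y_alloc.
  by rewrite !(node_map_allocated _ f2_f1) //; apply: tree1.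
- case/existsP => t /andP [rt sat_t].
  pose f1 j := if j == k then t else f j.
  have f1_f j : j < k -> f1 j = f j by rewrite /f1; case: eqP => // ->; rewrite ltnn.
  have sat_k : sat H p (node_map hS f1 (inr k)) by rewrite /= /f1 eqxx.
  have [f2 f2_f1 tree] := IH (inr k) k.+1 f1 (ltnSn k) sat_k.
  have f2_f j : j < k -> f2 j = f j by move=> j_lt; rewrite f2_f1 ?f1_f //; lia.
  exists f2 => // x b y; rewrite wtree_dia in_cons.
  case/orP => [/eqP [-> -> ->]|]; last exact: tree.
  by rewrite (node_map_allocated _ f2_f r_alloc) /= f2_f1 // /f1 eqxx.
Qed.

Lemma ext_hom_extend (L : finType) (G H : LTS L) (v : state G) (phi : hmlp L)
  (h : state G -> state H) :
  is_hom h -> sat H phi (h v) ->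
  exists2 g : state (Ext v phi) -> state H, is_hom g & g (ext_incl v phi v) = h v.
Proof.
move=> hom_h sat_phi.
have [f _ tree] := wtree_realize (r := inl v) (k := 0) (f := fun _ => h v) isT sat_phi.
exists (fun x => node_map h f (ext_node x)) => // a x y /orP [|/tree //].
by case: x => // s; case: y => // t /hom_h.
Qed.

Theorem mainTheorem19 (L : finType) (phi psi : hmlp L) (G : LTS L) (v : state G) :
  heyting_imp phi psi v <-> sat (Ext v phi) psi (ext_incl v phi v).
Proof.
split=> [imp | sat_psi H h hom_h sat_phi].
- exact: imp (ext_incl_hom v phi) (sat_ext_incl v phi).
- have [g hom_g <-] := ext_hom_extend hom_h sat_phi.
  exact: sat_hom hom_g _ _ sat_psi.
Qed.
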